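(* Assume $\delta=d$, $\gamma\ge1$ and $\alpha>0$. Then $\lim_{n\to\infty}d^{-n}\log^+|Q_z^n(w)|=+\infty$ for every $(z,w)\in A_f$, and $$\limsup_{n\to\infty}\frac{1}{d^n}\log^+|Q_z^n(w)|\le\alpha G_p(z)\quad\text{for every }(z,w)\in B_f.$$
   Context: Let $p(z)=z^d+O(z^{d-1})$ be a monic polynomial of degree $\delta=d\ge 2$, and let $q(z,w)=b(z)w^d+(\text{terms of lower degree in } w)$ be a polynomial with $\deg_w q=d$, where $b$ is a monic polynomial of degree $\gamma$. Let $f(z,w)=(p(z),q(z,w))$. Write $Q_z^n=q_{p^{n-1}(z)}\circ\cdots\circ q_{p(z)}\circ q_z$ with $q_z=q(z,\cdot)$, so $f^n(z,w)=(p^n(z),Q_z^n(w))$. Let $A_p=\{z: p^n(z)\to\infty\}$ and $G_p(z)=\lim_n d^{-n}\log^+|p^n(z)|$. Define $\alpha=\max\{(n_j-\gamma)/(d-m_j)\}$ over monomials $z^{n_j}w^{m_j}$ appearing in $q$ with nonzero coefficient and $m_j<d$, and $\alpha=-\infty$ if $q=b(z)w^d$. Let $W_R=\{(z,w):|z|>R,\ |w|>R|z|^\alpha\}$ (if $\alpha=-\infty$: $\{|z|>R,\ w\ne0\}$), fix $R>1$ large enough that $f(W_R)\subset W_R$ and $W_R\subset A_p\times\mathbb{C}$, and set $A_f=\bigcup_{n\ge0}f^{-n}(W_R)$, $B_f=(A_p\times\mathbb{C})\setminus A_f$. *)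

From Stdlib Require Import Reals Lra.
Open Scope R_scope.

Definition Cx := (R * R)%type.
Definition Cx0 : Cx := (0, 0).
Definition Cx1 : Cx := (1, 0).
Definition Cadd (x y : Cx) : Cx := (fst x + fst y, snd x + snd y).
Definition Cmul (x y : Cx) : Cx :=
  (fst x * fst y - snd x * snd y, fst x * snd y + snd x * fst y).
Fixpoint Cpow (x : Cx) (n : nat) : Cx :=
  match n with O => Cx1 | S k => Cmul x (Cpow x k) end.
Definition Cnorm (x : Cx) : R := sqrt (fst x * fst x + snd x * snd x).

Fixpoint csum (f : nat -> Cx) (n : nat) : Cx :=
  match n with O => Cx0 | S k => Cadd (csum f k) (f k) end.

Definition poly1 (a : nat -> Cx) (d : nat) (z : Cx) : Cx :=
  csum (fun i => Cmul (a i) (Cpow z i)) (S d).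

Definition poly2 (c : nat -> nat -> Cx) (N d : nat) (z w : Cx) : Cx :=
  csum (fun i => csum (fun j => Cmul (c i j) (Cmul (Cpow z i) (Cpow w j))) (S d)) (S N).

Definition logp (x : R) : R := if Rle_dec x 1 then 0 else ln x.

Definition skew (a : nat -> Cx) (c : nat -> nat -> Cx) (N d : nat) (zw : Cx * Cx) : Cx * Cx :=
  (poly1 a d (fst zw), poly2 c N d (fst zw) (snd zw)).
Definition skew_iter a c N d (n : nat) (zw : Cx * Cx) : Cx * Cx :=
  Nat.iter n (skew a c N d) zw.

Definition in_Ap (a : nat -> Cx) (d : nat) (z : Cx) : Prop :=
  cv_infty (fun n => Cnorm (Nat.iter n (poly1 a d) z)).

(* W_R for alpha > 0 (real exponent via Rpower, |z| > R > 1 so |z| > 0). *)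
Definition in_WR (alpha Rr : R) (zw : Cx * Cx) : Prop :=
  Cnorm (fst zw) > Rr /\ Cnorm (snd zw) > Rr * Rpower (Cnorm (fst zw)) alpha.

Definition is_alpha (c : nat -> nat -> Cx) (N d gamma : nat) (alpha : R) : Prop :=
  (exists i j, (i <= N)%nat /\ (j < d)%nat /\ c i j <> Cx0 /\
      alpha = (INR i - INR gamma) / (INR d - INR j)) /\
  (forall i j, (i <= N)%nat -> (j < d)%nat -> c i j <> Cx0 ->
      (INR i - INR gamma) / (INR d - INR j) <= alpha).

From Stdlib Require Import Reals Lra Lia.
Open Scope R_scope.
From HB Require structures.
From mathcomp Require all_boot all_order all_algebra.
From mathcomp Require Rstruct complex.

(* Write z_n = p^n(z) and w_n = Q_z^n(w).
   - For |z| beyond an explicit radius a monic polynomial of degree m is within a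
     factor 2 of z^m.  Hence ln|z_{n+1}| = d ln|z_n| +- ln 2 along an escaping orbit,
     and the elementary fact that 0 <= u_{k+1} <= D u_k + c forces u_k / D^k to
     converge gives the existence of G_p(z).
   - On B_f the orbit never enters W_R, so |w_n| <= R |z_n|^alpha once |z_n| > R;
     taking logarithms and dividing by d^n bounds the limsup by alpha G_p(z).
   - On A_f some iterate (Z,W) lies in W_R over an orbit of Z beyond that radius.
     For fixed Z, w |-> Q_Z^n(w) is a complex polynomial of degree d^n whose
     leading coefficient has modulus B_n, with B_{n+1} = |b(z_n)| B_n^d.  As W_R is
     forward invariant and has nonzero fibre coordinate, Q_Z^n has no zero in
     |w| > r = R|Z|^alpha, so factoring it gives |Q_Z^n(W)| >= B_n (|W| - r)^(d^n).
     Since gamma >= 1, |b(z_n)| >= |z_n|/2 grows like exp(d^n L), so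
     ln B_n >= n d^(n-1) L and d^{-n} log|Q_Z^n(W)| >= n L/d + const -> +oo. *)

(* [wcoef c N j z] is the coefficient of w^j in q(z, w); in particular
   [wcoef c N d z] is b(z). *)
Definition wcoef (c : nat -> nat -> Cx) (N j : nat) (z : Cx) : Cx :=
  csum (fun i => Cmul (c i j) (Cpow z i)) (S N).

(* Modulus of the leading coefficient of w |-> Q_Z^n(w): since
   Q_Z^{n+1} = q_{z_n} o Q_Z^n, it satisfies B_{n+1} = |b(z_n)| B_n^d. *)
Fixpoint lead_mod (a : nat -> Cx) (c : nat -> nat -> Cx) (N d : nat) (Z : Cx)
    (n : nat) : R :=
  match n with
  | O => 1
  | S k => Cnorm (wcoef c N d (Nat.iter k (poly1 a d) Z)) * lead_mod a c N d Z k ^ d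
  end.

Lemma fst_skew_iter a c N d n zw :
  fst (skew_iter a c N d n zw) = Nat.iter n (poly1 a d) (fst zw).
Proof.
induction n as [|n IH]; [reflexivity|].
unfold skew_iter in *; simpl; rewrite IH; reflexivity.
Qed.

Lemma skew_iter_add a c N d n m zw :
  skew_iter a c N d (n + m) zw = skew_iter a c N d n (skew_iter a c N d m zw).
Proof. unfold skew_iter; apply Nat.iter_add. Qed.

(* Identification of [Cx] with the algebraically closed field R[i] of
   MathComp; it gives the norm identities and, through the factorisation of
   complex polynomials, the key lower bound on the fibre iterates Q_Z^n. *)
Module ComplexModel.
Import HB.structures all_boot all_order all_algebra Rstruct complex.
Import Order.TTheory GRing.Theory Num.Theory.
Local Open Scope ring_scope.
Local Notation C := (Rcomplex R).
Local Notation normC := (@Normc.normc R).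

Definition toC (x : Cx) : C := Complex (fst x) (snd x).

Lemma toC_add x y : toC (Cadd x y) = toC x + toC y.
Proof. by case: x; case: y. Qed.

Lemma toC_mul x y : toC (Cmul x y) = toC x * toC y.
Proof. by case: x => a b; case: y. Qed.

Lemma toC_inj x y : toC x = toC y -> x = y.
Proof. by case: x => a b; case: y => a' b' [-> ->]. Qed.

Lemma toC_pow x n : toC (Cpow x n) = toC x ^+ n.
Proof. by elim: n => [|n IH] /=; rewrite ?expr0 // toC_mul IH exprS. Qed.

Lemma toC_csum f n : toC (csum f n) = \sum_(k < n) toC (f k).
Proof. by elim: n => [|n IH] /=; rewrite ?big_ord0 // toC_add IH big_ord_recr. Qed.

Lemma Cnorm_toC x : Cnorm x = normC (toC x).
Proof. by case: x => a b; rewrite /Cnorm /= RsqrtE !expr2. Qed.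

Lemma normC_pow (x : C) n : normC (x ^+ n) = normC x ^+ n.
Proof.
by elim: n => [|n IH]; rewrite ?expr0 ?Normc.normc1 // !exprS Normc.normcM IH.
Qed.

Lemma normC_ge0 (x : C) : 0 <= normC x.
Proof. by case: x => a b /=; apply: sqrtr_ge0. Qed.

Definition fiber_poly c N d z : {poly C} := \poly_(j < d.+1) toC (wcoef c N j z).

Lemma fiber_poly_eval c N d z w :
  toC (poly2 c N d z w) = (fiber_poly c N d z).[toC w].
Proof.
rewrite /poly2 /fiber_poly horner_poly toC_csum.
under eq_bigr => i _ do rewrite toC_csum.
rewrite exchange_big /=; apply: eq_bigr => j _.
rewrite /wcoef toC_csum mulr_suml; apply: eq_bigr => i _.
by rewrite !toC_mul !toC_pow mulrA.
Qed.

Fixpoint iterate_poly a c N d Z n : {poly C} :=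
  match n with
  | O => 'X
  | S k => fiber_poly c N d (Nat.iter k (poly1 a d) Z) \Po iterate_poly a c N d Z k
  end.

Lemma iterate_poly_eval a c N d Z n w :
  toC (snd (skew_iter a c N d n (Z, w))) = (iterate_poly a c N d Z n).[toC w].
Proof.
elim: n => [|n IH] /=; first by rewrite hornerX.
rewrite horner_comp -IH -fiber_poly_eval -(fst_skew_iter a c N d n (Z, w)).
by [].
Qed.

Lemma iterate_poly_size_lead a c N d Z n : (1 <= d)%N ->
  (forall k, wcoef c N d (Nat.iter k (poly1 a d) Z) <> Cx0) ->
  size (iterate_poly a c N d Z n) = (d ^ n).+1 /\
  normC (lead_coef (iterate_poly a c N d Z n)) = lead_mod a c N d Z n.
Proof.
move=> d_gt0 b_neq0; elim: n => [|n [IHs IHl]] /=.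
  by rewrite size_polyX lead_coefX Normc.normc1.
set z := Nat.iter n (poly1 a d) Z.
have b_z : toC (wcoef c N d z) != 0.
  by apply/eqP => bz0; apply: (b_neq0 n); apply: toC_inj; rewrite bz0.
have size_q : size (fiber_poly c N d z) = d.+1 by rewrite size_poly_eq.
have lead_q : lead_coef (fiber_poly c N d z) = toC (wcoef c N d z).
  by rewrite lead_coef_poly.
have size_P : (1 < size (iterate_poly a c N d Z n))%N.
  by rewrite IHs ltnS expn_gt0 (leq_trans _ d_gt0).
split.
  have q_neq0 : fiber_poly c N d z != 0 by rewrite -size_poly_eq0 size_q.
  by rewrite polySpred ?comp_poly_eq0 // size_comp_poly size_q IHs /= expnS.
rewrite lead_coef_comp // size_q /= Normc.normcM lead_q -Cnorm_toC normC_pow IHl.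
by rewrite RpowE.
Qed.

Lemma prod_XsubC_lower (rs : seq C) (y : C) (r : R) :
  (forall z, z \in rs -> normC z <= r) -> r < normC y ->
  (normC y - r) ^+ size rs <= normC ((\prod_(z <- rs) ('X - z%:P)).[y]).
Proof.
move=> rs_in_disc r_lt_y; elim: rs rs_in_disc => [|z rs IH] rs_in_disc.
  by rewrite big_nil hornerC expr0 Normc.normc1.
rewrite big_cons hornerM hornerXsubC Normc.normcM /= exprS.
have y_z : normC y - r <= normC (y - z).
  have := le_normcD (y - z) z; rewrite subrK => tri.
  apply: le_trans (_ : normC y - normC z <= _); last by rewrite lerBlDr.
  by rewrite lerB // rs_in_disc // in_cons eqxx.
have r_le_y : 0 <= normC y - r by rewrite subr_ge0 ltW.
apply: ler_pM => //; first exact: exprn_ge0.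
by apply: IH => w w_in; apply: rs_in_disc; rewrite in_cons w_in orbT.
Qed.

Lemma root_free_lower_bound (P : {poly C}) (r : R) :
  (forall x : C, r < normC x -> ~~ root P x) ->
  forall y, r < normC y -> normC (lead_coef P) * (normC y - r) ^+ (size P).-1 <= normC P.[y].
Proof.
move=> no_root y r_lt_y.
have [rs P_eq] := closed_field_poly_normal P.
have [->|P_neq0] := eqVneq P 0.
  by rewrite lead_coef0 Normc.normc0 mul0r normC_ge0.
have lead_neq0 : lead_coef P != 0 by rewrite lead_coef_eq0.
have -> : (size P).-1 = size rs by rewrite {1}P_eq size_scale // size_prod_XsubC.
rewrite {2}P_eq hornerZ Normc.normcM; apply: ler_wpM2l; first exact: normC_ge0.
apply: prod_XsubC_lower => // z z_in; rewrite leNgt; apply/negP => r_lt_z.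
by have := no_root z r_lt_z; rewrite P_eq rootZ // root_prod_XsubC z_in.
Qed.

Local Close Scope ring_scope.

Lemma Cnorm_mul x y : Cnorm (Cmul x y) = Cnorm x * Cnorm y.
Proof. by rewrite !Cnorm_toC toC_mul Normc.normcM. Qed.

Lemma Cnorm_pow x n : Cnorm (Cpow x n) = Cnorm x ^ n.
Proof. by rewrite !Cnorm_toC toC_pow normC_pow RpowE. Qed.

Lemma Cnorm_triangle x y : Cnorm (Cadd x y) <= Cnorm x + Cnorm y.
Proof. apply/RleP; rewrite !Cnorm_toC toC_add; exact: le_normcD. Qed.

Lemma Cnorm_triangle_rev x y : Cnorm y - Cnorm x <= Cnorm (Cadd x y).
Proof.
apply/RleP; rewrite !Cnorm_toC toC_add.
have := le_normcD (toC x + toC y)%R (- toC x)%R.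
by rewrite addrC addKr normcN lerBlDr.
Qed.

Lemma fiber_iterate_lower_bound a c N d Z r : le 1 d ->
  (forall k, wcoef c N d (Nat.iter k (poly1 a d) Z) <> Cx0) ->
  (forall n w, r < Cnorm w -> snd (skew_iter a c N d n (Z, w)) <> Cx0) ->
  forall n w, r < Cnorm w ->
    lead_mod a c N d Z n * (Cnorm w - r) ^ Nat.pow d n
      <= Cnorm (snd (skew_iter a c N d n (Z, w))).
Proof.
move=> d_ge1 b_neq0 no_zero n w r_lt_w.
have d_gt0 : (0 < d)%N by apply/ssrnat.leP.
have [size_P lead_P] := iterate_poly_size_lead a c N d Z n d_gt0 b_neq0.
have natpowE : Nat.pow d n = expn d n.
  by elim: n {size_P lead_P} => [|n IH] //=; rewrite expnS IH.
apply/RleP; rewrite RpowE natpowE !Cnorm_toC iterate_poly_eval -lead_P.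
have := root_free_lower_bound (iterate_poly a c N d Z n) r _ (toC w).
rewrite size_P succnK; apply; last by rewrite -Cnorm_toC; apply/RltP.
case=> u v r_lt_uv; apply/negP => /rootP root_uv.
apply: (no_zero n (u, v)); first by rewrite Cnorm_toC; apply/RltP.
by apply: toC_inj; rewrite iterate_poly_eval root_uv.
Qed.

End ComplexModel.
Import ComplexModel.


Lemma Cnorm_ge0 x : 0 <= Cnorm x.
Proof. unfold Cnorm; apply sqrt_pos. Qed.

Lemma Cnorm_Cx0 : Cnorm Cx0 = 0.
Proof. unfold Cnorm, Cx0; simpl; replace (0 * 0 + 0 * 0) with 0 by ring; apply sqrt_0. Qed.

Lemma Cmul1l x : Cmul Cx1 x = x.
Proof. destruct x; unfold Cmul, Cx1; simpl; f_equal; ring. Qed.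

Lemma Cmul0l x : Cmul Cx0 x = Cx0.
Proof. destruct x; unfold Cmul, Cx0; simpl; f_equal; ring. Qed.

Lemma Cadd0r x : Cadd x Cx0 = x.
Proof. destruct x; unfold Cadd, Cx0; simpl; f_equal; ring. Qed.

Fixpoint coef_mass (e : nat -> Cx) (m : nat) : R :=
  match m with O => 0 | S k => coef_mass e k + Cnorm (e k) end.

(* Beyond this radius a monic polynomial of degree m with coefficients e
   is comparable to its leading monomial. *)
Definition monic_radius (e : nat -> Cx) (m : nat) : R := 2 * coef_mass e m + 1.

Lemma coef_mass_ge0 e m : 0 <= coef_mass e m.
Proof. induction m; simpl; [lra|]. pose proof (Cnorm_ge0 (e m)); lra. Qed.

Lemma monic_radius_ge1 e m : 1 <= monic_radius e m.
Proof. unfold monic_radius; pose proof (coef_mass_ge0 e m); lra. Qed.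

Lemma csum_upper e m z : 1 <= Cnorm z ->
  Cnorm (csum (fun i => Cmul (e i) (Cpow z i)) m) <= coef_mass e m * Cnorm z ^ pred m.
Proof.
intros hz; induction m as [|m IH]; simpl.
- rewrite Cnorm_Cx0; lra.
- eapply Rle_trans; [apply Cnorm_triangle|].
  rewrite Cnorm_mul, Cnorm_pow.
  assert (Cnorm z ^ pred m <= Cnorm z ^ m) by (apply Rle_pow; [lra|lia]).
  pose proof (coef_mass_ge0 e m); pose proof (Cnorm_ge0 (e m)).
  assert (coef_mass e m * Cnorm z ^ pred m <= coef_mass e m * Cnorm z ^ m)
    by (apply Rmult_le_compat_l; lra).
  lra.
Qed.

Lemma monic_bounds e m z : e m = Cx1 -> (1 <= m)%nat -> monic_radius e m <= Cnorm z ->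
  Cnorm z ^ m / 2 <= Cnorm (csum (fun i => Cmul (e i) (Cpow z i)) (S m)) <= 2 * Cnorm z ^ m.
Proof.
unfold monic_radius; intros he hm hz; simpl csum; rewrite he, Cmul1l.
pose proof (coef_mass_ge0 e m).
pose proof (csum_upper e m z ltac:(lra)) as hlow.
set (L := csum (fun i => Cmul (e i) (Cpow z i)) m) in *.
assert (hzm : Cnorm z ^ m = Cnorm z * Cnorm z ^ pred m)
  by (destruct m; [lia|reflexivity]).
assert (0 <= Cnorm z ^ pred m) by (apply pow_le; lra).
assert (coef_mass e m * Cnorm z ^ pred m <= Cnorm z ^ m / 2)
  by (rewrite hzm; apply Rmult_le_compat_r with (r := Cnorm z ^ pred m) in hz; nra).
pose proof (Cnorm_triangle L (Cpow z m)); pose proof (Cnorm_triangle_rev L (Cpow z m)).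
rewrite Cnorm_pow in *; lra.
Qed.

Lemma csum_trunc (f : nat -> Cx) m : (forall i, (m <= i)%nat -> f i = Cx0) ->
  forall n, (m <= n)%nat -> csum f n = csum f m.
Proof.
intros hf n hn; induction hn as [|n hn IH]; [reflexivity|].
simpl; rewrite IH, hf by lia; apply Cadd0r.
Qed.

Lemma poly1_bounds a d z : a d = Cx1 -> (1 <= d)%nat -> monic_radius a d <= Cnorm z ->
  Cnorm z ^ d / 2 <= Cnorm (poly1 a d z) <= 2 * Cnorm z ^ d.
Proof. intros; apply monic_bounds; assumption. Qed.

Lemma b_lower_bound c N d gamma z : c gamma d = Cx1 ->
  (forall i, (gamma < i)%nat -> c i d = Cx0) -> (1 <= gamma <= N)%nat ->
  monic_radius (fun i => c i d) gamma <= Cnorm z ->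
  Cnorm z / 2 <= Cnorm (wcoef c N d z).
Proof.
intros hlead hdeg hgamma hz; pose proof (monic_radius_ge1 (fun i => c i d) gamma).
unfold wcoef; rewrite (csum_trunc _ (S gamma)) by (intros; rewrite ?hdeg by lia; try lia; apply Cmul0l).
destruct (monic_bounds (fun i => c i d) gamma z hlead ltac:(lia) hz) as [hb _].
assert (Cnorm z ^ 1 <= Cnorm z ^ gamma) by (apply Rle_pow; [lra|lia]).
rewrite pow_1 in *; lra.
Qed.

Lemma ln_le_compat x y : 0 < x -> x <= y -> ln x <= ln y.
Proof.
intros hx hxy; destruct (Rle_lt_or_eq_dec _ _ hxy) as [h|h].
- left; apply ln_increasing; lra.
- subst; lra.
Qed.

Lemma ln2_pos : 0 < ln 2.
Proof. pose proof ln_lt_2; lra. Qed.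

Lemma logp_ln x : 1 < x -> logp x = ln x.
Proof. intros hx; unfold logp; destruct (Rle_dec x 1); [lra|reflexivity]. Qed.

Lemma logp_ge_ln x : 0 < x -> ln x <= logp x.
Proof.
intros hx; unfold logp; destruct (Rle_dec x 1); [|lra].
rewrite <- ln_1; apply ln_le_compat; lra.
Qed.

Lemma logp_mono x y : x <= y -> logp x <= logp y.
Proof.
intros hxy; unfold logp.
destruct (Rle_dec x 1), (Rle_dec y 1); try lra;
  [rewrite <- ln_1|]; apply ln_le_compat; lra.
Qed.

Lemma ln_poly1_step a d z : a d = Cx1 -> (1 <= d)%nat -> monic_radius a d < Cnorm z ->
  INR d * ln (Cnorm z) - ln 2 <= ln (Cnorm (poly1 a d z)) <= INR d * ln (Cnorm z) + ln 2.
Proof.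
intros hlead hd hz; pose proof (monic_radius_ge1 a d).
destruct (poly1_bounds a d z hlead hd ltac:(lra)) as [hlow hup].
assert (hpow : 0 < Cnorm z ^ d) by (apply pow_lt; lra).
assert (e1 : ln (Cnorm z ^ d / 2) = INR d * ln (Cnorm z) - ln 2)
  by (unfold Rdiv; rewrite ln_mult, ln_Rinv, ln_pow by lra; ring).
assert (e2 : ln (2 * Cnorm z ^ d) = INR d * ln (Cnorm z) + ln 2)
  by (rewrite ln_mult, ln_pow by lra; ring).
rewrite <- e1, <- e2; split; apply ln_le_compat; lra.
Qed.

Lemma Un_cv_shift (u : nat -> R) n0 l : Un_cv (fun k => u (n0 + k)%nat) l -> Un_cv u l.
Proof.
intros h eps he; destruct (h eps he) as [M hM]; exists (n0 + M)%nat; intros n hn.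
replace n with (n0 + (n - n0))%nat by lia; apply hM; lia.
Qed.

Lemma Un_cv_ext (u v : nat -> R) l : (forall n, u n = v n) -> Un_cv u l -> Un_cv v l.
Proof. intros h hu eps he; destruct (hu eps he) as [M hM]; exists M; intros; rewrite <- h; auto. Qed.

Lemma Un_cv_const (x : R) : Un_cv (fun _ => x) x.
Proof. intros eps he; exists O; intros; unfold R_dist; rewrite Rminus_diag, Rabs_R0; lra. Qed.

Lemma inv_pow_cv0 D : 1 < D -> Un_cv (fun n => / D ^ n) 0.
Proof.
intros hD eps he.
assert (hinv : Rabs (/ D) < 1).
{ rewrite Rabs_right by (left; apply Rinv_0_lt_compat; lra).
  rewrite <- Rinv_1; apply Rinv_lt_contravar; lra. }
destruct (pow_lt_1_zero (/ D) hinv eps he) as [M hM].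
exists M; intros n hn; unfold R_dist; rewrite Rminus_0_r, <- pow_inv; auto.
Qed.

(* If 0 <= u_{k+1} <= D u_k + c with D > 1, then u_k / D^k converges: the
   sequence u_k / D^k + c/((D-1) D^k) is nonincreasing and nonnegative. *)
Lemma renormalized_limit D c (u : nat -> R) : 1 < D -> 0 <= c ->
  (forall k, 0 <= u k) -> (forall k, u (S k) <= D * u k + c) ->
  exists G, Un_cv (fun k => u k / D ^ k) G.
Proof.
intros hD hc hu hstep.
set (corr := fun k => c / (D - 1) * / D ^ k).
set (v := fun k => u k / D ^ k + corr k).
assert (hpos : forall k, 0 < D ^ k) by (intro; apply pow_lt; lra).
assert (hcorr : forall k, 0 <= corr k).
{ intro k; unfold corr; apply Rmult_le_pos; [apply Rmult_le_pos|];
    try (left; apply Rinv_0_lt_compat); auto; lra. }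
assert (hdec : Un_decreasing v).
{ intro k; pose proof (hpos k); pose proof (hstep k).
  assert (e : v k - v (S k) = (D * u k - u (S k) + c) * / D ^ S k)
    by (unfold v, corr, Rdiv; simpl; field; lra).
  assert (0 <= (D * u k - u (S k) + c) * / D ^ S k)
    by (apply Rmult_le_pos; [lra|left; apply Rinv_0_lt_compat; apply hpos]).
  lra. }
assert (hlb : has_lb v).
{ exists 0; intros x [k ->]; unfold opp_seq, v; pose proof (hcorr k).
  assert (0 <= u k / D ^ k)
    by (apply Rmult_le_pos; [apply hu|left; apply Rinv_0_lt_compat; apply hpos]).
  lra. }
destruct (decreasing_cv v hdec hlb) as [G hG]; exists G.
assert (hcorr0 : Un_cv corr 0).
{ unfold corr; replace 0 with (c / (D - 1) * 0) by ring.
  apply CV_mult; [apply Un_cv_const|apply inv_pow_cv0; lra]. }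
pose proof (CV_minus _ _ _ _ hG hcorr0) as hlim; rewrite Rminus_0_r in hlim.
refine (Un_cv_ext _ _ _ _ hlim); intro k; unfold v; ring.
Qed.

Lemma geometric_lower D c (u : nat -> R) : 2 <= D -> 0 <= c ->
  (forall k, D * u k - c <= u (S k)) -> forall k, D ^ k * (u O - c) <= u k - c.
Proof.
intros hD hc hstep k; induction k as [|k IH]; simpl; [lra|].
pose proof (hstep k).
assert (D * (D ^ k * (u O - c)) <= D * (u k - c)) by (apply Rmult_le_compat_l; lra).
nra.
Qed.

Lemma superlinear_lower D L (beta : nat -> R) : 0 < D -> beta O = 0 ->
  (forall n, D ^ n * L + D * beta n <= beta (S n)) ->
  forall n, INR n * D ^ n * L <= D * beta n.
Proof.
intros hD h0 hstep n; induction n as [|n IH]; [simpl; rewrite h0; lra|].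
pose proof (hstep n).
assert (D * (INR n * D ^ n * L) <= D * (D * beta n)) by (apply Rmult_le_compat_l; lra).
rewrite S_INR; change (D ^ S n) with (D * D ^ n); nra.
Qed.

Lemma cv_infty_of_lower D A c k0 (x : nat -> R) : 0 < D -> 0 < A ->
  (forall j, D ^ j * (INR j * A + c) <= x (j + k0)%nat) ->
  cv_infty (fun n => x n / D ^ n).
Proof.
intros hD hA hx M.
assert (hk0 : 0 < D ^ k0) by (apply pow_lt; lra).
destruct (INR_unbounded ((Rabs M * D ^ k0 - c) / A)) as [j0 hj0].
exists (j0 + k0)%nat; intros n hn.
set (j := (n - k0)%nat); replace n with (j + k0)%nat by (unfold j; lia).
assert (hj : INR j0 <= INR j) by (apply le_INR; unfold j; lia).
assert (hpj : 0 < D ^ j) by (apply pow_lt; lra).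
assert (hbig : Rabs M * D ^ k0 < INR j * A + c).
{ apply Rmult_lt_compat_r with (r := A) in hj0; [|lra].
  unfold Rdiv in hj0; rewrite Rmult_assoc, Rinv_l, Rmult_1_r in hj0 by lra.
  assert (INR j0 * A <= INR j * A) by (apply Rmult_le_compat_r; lra).
  lra. }
pose proof (hx j) as hxj; pose proof (Rle_abs M).
rewrite pow_add; unfold Rdiv.
apply Rmult_lt_reg_r with (r := D ^ j * D ^ k0); [nra|].
rewrite Rmult_assoc, Rinv_l, Rmult_1_r by nra.
assert (M * D ^ k0 < INR j * A + c) by nra.
nra.
Qed.

Lemma green_limit a d z n0 : a d = Cx1 -> (2 <= d)%nat ->
  (forall n, (n0 <= n)%nat -> monic_radius a d < Cnorm (Nat.iter n (poly1 a d) z)) ->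
  exists G, Un_cv (fun n => logp (Cnorm (Nat.iter n (poly1 a d) z)) / INR d ^ n) G.
Proof.
intros hlead hd hfar.
set (zn := fun n => Nat.iter n (poly1 a d) z).
assert (hD : 2 <= INR d) by (apply (le_INR 2); lia).
assert (hbig : forall k, 1 < Cnorm (zn (n0 + k)%nat)).
{ intro k; pose proof (monic_radius_ge1 a d); pose proof (hfar (n0 + k)%nat ltac:(lia)).
  unfold zn; lra. }
destruct (renormalized_limit (INR d) (ln 2) (fun k => ln (Cnorm (zn (n0 + k)%nat))))
  as [G hG]; [lra | left; apply ln2_pos | | |].
- intro k; rewrite <- ln_1; apply ln_le_compat; [lra|left; apply hbig].
- intro k; replace (n0 + S k)%nat with (S (n0 + k)) by lia.
  destruct (ln_poly1_step a d (zn (n0 + k)%nat) hlead ltac:(lia)) as [_ hup];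
    [apply hfar; lia | exact hup].
- exists (G * / INR d ^ n0); apply (Un_cv_shift _ n0).
  assert (0 < INR d ^ n0) by (apply pow_lt; lra).
  refine (Un_cv_ext _ _ _ _ (CV_mult _ _ _ _ hG (Un_cv_const (/ INR d ^ n0)))).
  intro k; assert (0 < INR d ^ k) by (apply pow_lt; lra).
  fold (zn (n0 + k)%nat); rewrite logp_ln by apply hbig; rewrite pow_add.
  field; lra.
Qed.

Lemma limsup_of_log_bound D alpha K G (x l : nat -> R) n0 : 1 < D ->
  (forall n, (n0 <= n)%nat -> x n <= K + alpha * l n) ->
  Un_cv (fun n => l n / D ^ n) G ->
  forall eps, eps > 0 -> exists M, forall n, (M <= n)%nat -> x n / D ^ n <= alpha * G + eps.
Proof.
intros hD hx hl eps heps.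
assert (hK : Un_cv (fun n => K * / D ^ n) 0).
{ replace 0 with (K * 0) by ring; apply CV_mult; [apply Un_cv_const|apply inv_pow_cv0; lra]. }
destruct (CV_plus _ _ _ _ hK (CV_mult _ _ _ _ (Un_cv_const alpha) hl) eps heps) as [M1 hM1].
exists (n0 + M1)%nat; intros n hn.
specialize (hM1 n ltac:(lia)); unfold R_dist in hM1; apply Rabs_def2 in hM1.
assert (hpos : 0 < / D ^ n) by (apply Rinv_0_lt_compat, pow_lt; lra).
assert (x n / D ^ n <= (K + alpha * l n) * / D ^ n)
  by (apply Rmult_le_compat_r; [lra|apply hx; lia]).
unfold Rdiv in *; lra.
Qed.

Lemma Rpower_ge1 x y : 1 <= x -> 0 <= y -> 1 <= Rpower x y.
Proof.
intros hx hy; unfold Rpower; rewrite <- exp_0.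
assert (0 <= ln x) by (rewrite <- ln_1; apply ln_le_compat; lra).
destruct (Rle_lt_or_eq_dec 0 (y * ln x)) as [h|h]; [apply Rmult_le_pos; lra| |].
- left; apply exp_increasing; exact h.
- rewrite <- h; lra.
Qed.

Lemma logp_outside_WR alpha Rr z w : 0 <= alpha -> 1 < Rr -> Rr < Cnorm z ->
  ~ in_WR alpha Rr (z, w) -> logp (Cnorm w) <= ln Rr + alpha * logp (Cnorm z).
Proof.
intros halpha hR hz hout.
assert (hw : Cnorm w <= Rr * Rpower (Cnorm z) alpha).
{ destruct (Rle_or_lt (Cnorm w) (Rr * Rpower (Cnorm z) alpha)) as [h|h]; [exact h|].
  exfalso; apply hout; split; simpl; lra. }
pose proof (Rpower_ge1 (Cnorm z) alpha ltac:(lra) halpha).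
eapply Rle_trans; [apply logp_mono, hw|].
rewrite logp_ln, ln_mult, ln_Rpower, (logp_ln (Cnorm z)) by (unfold Rpower in *; try apply exp_pos; nra).
lra.
Qed.

Lemma Bf_limsup a c N d alpha Rr z w : (2 <= d)%nat -> a d = Cx1 -> 1 < Rr -> 0 < alpha ->
  in_Ap a d z -> ~ (exists n, in_WR alpha Rr (skew_iter a c N d n (z, w))) ->
  exists G : R,
    Un_cv (fun n => logp (Cnorm (Nat.iter n (poly1 a d) z)) / INR d ^ n) G /\
    (forall eps, eps > 0 -> exists M : nat, forall n, (M <= n)%nat ->
       logp (Cnorm (snd (skew_iter a c N d n (z, w)))) / INR d ^ n <= alpha * G + eps).
Proof.
intros hd hlead hR halpha hz hnot.
pose proof (monic_radius_ge1 a d).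
destruct (hz (monic_radius a d + Rr)) as [n0 hn0].
destruct (green_limit a d z n0 hlead hd) as [G hG]; [intros n hn; specialize (hn0 n hn); lra|].
exists G; split; [exact hG|].
assert (hD : 1 < INR d) by (apply (lt_INR 1); lia).
refine (limsup_of_log_bound _ _ (ln Rr) _ _ _ n0 hD _ hG).
intros n hn; specialize (hn0 n hn).
apply logp_outside_WR; [lra|lra|lra|].
intro hin; apply hnot; exists n.
rewrite (surjective_pairing (skew_iter a c N d n (z, w))), fst_skew_iter; exact hin.
Qed.

Section EscapingFibres.

Variables (a : nat -> Cx) (c : nat -> nat -> Cx) (N d gamma : nat) (alpha Rr : R).
Hypothesis Hd : (2 <= d)%nat.
Hypothesis Ha_lead : a d = Cx1.
Hypothesis Hgamma : (1 <= gamma <= N)%nat.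
Hypothesis Hb_lead : c gamma d = Cx1.
Hypothesis Hb_deg : forall i, (gamma < i)%nat -> c i d = Cx0.
Hypothesis HR : 1 < Rr.
Hypothesis HWinv : forall zw, in_WR alpha Rr zw -> in_WR alpha Rr (skew a c N d zw).

Definition far_orbit (Z : Cx) : Prop :=
  forall k, monic_radius a d + monic_radius (fun i => c i d) gamma
              < Cnorm (Nat.iter k (poly1 a d) Z).

Lemma far_orbit_b_lower Z : far_orbit Z -> forall k,
  Cnorm (Nat.iter k (poly1 a d) Z) / 2 <= Cnorm (wcoef c N d (Nat.iter k (poly1 a d) Z)).
Proof.
intros hfar k; pose proof (monic_radius_ge1 a d); specialize (hfar k).
apply (b_lower_bound c N d gamma); auto; lra.
Qed.

Lemma far_orbit_ln_growth Z : far_orbit Z -> forall k,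
  INR d ^ k * (ln (Cnorm Z) - ln 2) <= ln (Cnorm (Nat.iter k (poly1 a d) Z)) - ln 2.
Proof.
intros hfar.
apply (geometric_lower (INR d) (ln 2) (fun k => ln (Cnorm (Nat.iter k (poly1 a d) Z)))).
- apply (le_INR 2); lia.
- left; apply ln2_pos.
- intro k; pose proof (monic_radius_ge1 (fun i => c i d) gamma); specialize (hfar k).
  destruct (ln_poly1_step a d (Nat.iter k (poly1 a d) Z) Ha_lead ltac:(lia)) as [hlow _];
    [lra | exact hlow].
Qed.

Lemma far_orbit_lead_mod_pos Z : far_orbit Z -> forall n, 0 < lead_mod a c N d Z n.
Proof.
intros hfar n; induction n as [|n IH]; simpl; [lra|].
pose proof (far_orbit_b_lower Z hfar n); pose proof (monic_radius_ge1 a d).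
specialize (hfar n).
apply Rmult_lt_0_compat; [|apply pow_lt; exact IH].
pose proof (monic_radius_ge1 (fun i => c i d) gamma); lra.
Qed.

(* Because gamma >= 1 the leading coefficient of Q_Z^n grows superexponentially:
   d ln B_n >= n d^n (ln|Z| - ln 2). *)
Lemma far_orbit_lead_mod_growth Z : far_orbit Z -> forall n,
  INR n * INR d ^ n * (ln (Cnorm Z) - ln 2) <= INR d * ln (lead_mod a c N d Z n).
Proof.
intros hfar.
apply (superlinear_lower (INR d) _ (fun n => ln (lead_mod a c N d Z n))).
- apply (lt_INR 0); lia.
- simpl; apply ln_1.
- intro n; pose proof (far_orbit_lead_mod_pos Z hfar n) as hB.
  pose proof (far_orbit_b_lower Z hfar n) as hb; pose proof (far_orbit_ln_growth Z hfar n).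
  pose proof (monic_radius_ge1 a d); pose proof (monic_radius_ge1 (fun i => c i d) gamma).
  specialize (hfar n).
  set (zn := Nat.iter n (poly1 a d) Z) in *.
  assert (ln (Cnorm zn) - ln 2 <= ln (Cnorm (wcoef c N d zn))).
  { replace (ln (Cnorm zn) - ln 2) with (ln (Cnorm zn / 2))
      by (unfold Rdiv; rewrite ln_mult, ln_Rinv by lra; ring).
    apply ln_le_compat; lra. }
  change (INR d ^ n * (ln (Cnorm Z) - ln 2) + INR d * ln (lead_mod a c N d Z n)
          <= ln (Cnorm (wcoef c N d zn) * lead_mod a c N d Z n ^ d)).
  rewrite ln_mult, ln_pow by (try apply pow_lt; lra); lra.
Qed.

Lemma WR_iter n zw : in_WR alpha Rr zw -> in_WR alpha Rr (skew_iter a c N d n zw).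
Proof.
induction n as [|n IH]; intro h; [exact h|].
change (in_WR alpha Rr (skew a c N d (skew_iter a c N d n zw))); auto.
Qed.

(* Since W_R is forward invariant and its points have nonzero fibre coordinate,
   Q_Z^n has no zero in |w| > R |Z|^alpha. *)
Lemma fiber_iterate_nonzero Z n w : Rr * Rpower (Cnorm Z) alpha < Cnorm w -> Rr < Cnorm Z ->
  snd (skew_iter a c N d n (Z, w)) <> Cx0.
Proof.
intros hw hZ hzero.
destruct (WR_iter n (Z, w) (conj hZ hw)) as [_ hin].
rewrite hzero, Cnorm_Cx0 in hin.
assert (0 < Rpower (Cnorm (fst (skew_iter a c N d n (Z, w)))) alpha) by apply exp_pos.
nra.
Qed.

Lemma fiber_log_lower Z W : in_WR alpha Rr (Z, W) -> far_orbit Z -> forall j,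
  INR d ^ j * (INR j * ((ln (Cnorm Z) - ln 2) / INR d)
                 + ln (Cnorm W - Rr * Rpower (Cnorm Z) alpha))
    <= logp (Cnorm (snd (skew_iter a c N d j (Z, W)))).
Proof.
intros [hZ hW] hfar j; simpl in hZ, hW.
set (r := Rr * Rpower (Cnorm Z) alpha) in *.
assert (hD : 2 <= INR d) by (apply (le_INR 2); lia).
assert (hb : forall k, wcoef c N d (Nat.iter k (poly1 a d) Z) <> Cx0).
{ intros k hk; pose proof (far_orbit_b_lower Z hfar k) as hbk.
  pose proof (monic_radius_ge1 a d); specialize (hfar k).
  pose proof (monic_radius_ge1 (fun i => c i d) gamma).
  rewrite hk, Cnorm_Cx0 in hbk; lra. }
assert (hr : 0 <= r) by (unfold r, Rpower; pose proof (exp_pos (alpha * ln (Cnorm Z))); nra).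
pose proof (fiber_iterate_lower_bound a c N d Z r ltac:(lia) hb
              (fun n w hw => fiber_iterate_nonzero Z n w hw hZ) j W hW) as hlow.
pose proof (far_orbit_lead_mod_pos Z hfar j) as hB.
pose proof (far_orbit_lead_mod_growth Z hfar j) as hgrowth.
assert (hpow : 0 < (Cnorm W - r) ^ Nat.pow d j) by (apply pow_lt; lra).
assert (hprod : 0 < lead_mod a c N d Z j * (Cnorm W - r) ^ Nat.pow d j)
  by (apply Rmult_lt_0_compat; lra).
eapply Rle_trans; [|apply logp_ge_ln; lra].
apply ln_le_compat in hlow; [|exact hprod].
rewrite ln_mult, ln_pow, pow_INR in hlow by lra.
assert (INR d ^ j * (INR j * ((ln (Cnorm Z) - ln 2) / INR d)) <= ln (lead_mod a c N d Z j)).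
{ apply Rmult_le_reg_l with (r := INR d); [lra|].
  replace (INR d * (INR d ^ j * (INR j * ((ln (Cnorm Z) - ln 2) / INR d))))
    with (INR j * INR d ^ j * (ln (Cnorm Z) - ln 2)) by (field; lra).
  exact hgrowth. }
lra.
Qed.

(* On A_f: after finitely many steps the orbit lies in W_R over a far base
   orbit, and there the fibre coordinate escapes faster than any d^n. *)
Lemma Af_escape z w :
  (forall zw, in_WR alpha Rr zw -> in_Ap a d (fst zw)) ->
  (exists n, in_WR alpha Rr (skew_iter a c N d n (z, w))) ->
  cv_infty (fun n => logp (Cnorm (snd (skew_iter a c N d n (z, w)))) / INR d ^ n).
Proof.
intros HWAp [m hm].
set (K := monic_radius a d + monic_radius (fun i => c i d) gamma).
destruct (HWAp _ hm (K + 2)) as [n' hn'].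
set (ZW := skew_iter a c N d n' (skew_iter a c N d m (z, w))).
assert (hZW : in_WR alpha Rr ZW) by (apply WR_iter; exact hm).
rewrite (surjective_pairing ZW) in hZW.
assert (hfar : far_orbit (fst ZW)).
{ intro k; unfold ZW; rewrite fst_skew_iter, <- Nat.iter_add.
  specialize (hn' (k + n')%nat ltac:(lia)); unfold K in *; lra. }
assert (hL : 2 < Cnorm (fst ZW)).
{ specialize (hfar O); pose proof (monic_radius_ge1 a d).
  pose proof (monic_radius_ge1 (fun i => c i d) gamma); simpl in hfar; lra. }
apply (cv_infty_of_lower (INR d) ((ln (Cnorm (fst ZW)) - ln 2) / INR d)
         (ln (Cnorm (snd ZW) - Rr * Rpower (Cnorm (fst ZW)) alpha)) (n' + m)).
- apply (lt_INR 0); lia.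
- apply Rdiv_lt_0_compat; [|apply (lt_INR 0); lia].
  assert (ln 2 < ln (Cnorm (fst ZW))) by (apply ln_increasing; lra); lra.
- intro j; rewrite !skew_iter_add; fold ZW; rewrite (surjective_pairing ZW).
  exact (fiber_log_lower _ _ hZW hfar j).
Qed.

End EscapingFibres.

Theorem theorem6p3
  (d N gamma : nat) (a : nat -> Cx) (c : nat -> nat -> Cx) (alpha Rr : R)
  (* p(z) = z^d + O(z^{d-1}), d >= 2 *)
  (Hd : (2 <= d)%nat)
  (Ha_lead : a d = Cx1)
  (Ha_deg : forall i, (d < i)%nat -> a i = Cx0)
  (* q(z,w) = sum_{i<=N, j<=d} c i j z^i w^j *)
  (Hc_supp : forall i j, ((N < i)%nat \/ (d < j)%nat) -> c i j = Cx0)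
  (* b(z) = sum_i c i d z^i is monic of degree gamma >= 1 (so deg_w q = d) *)
  (Hgamma : (1 <= gamma <= N)%nat)
  (Hb_lead : c gamma d = Cx1)
  (Hb_deg : forall i, (gamma < i)%nat -> c i d = Cx0)
  (* alpha as defined, and alpha > 0 *)
  (Halpha : is_alpha c N d gamma alpha)
  (Halpha_pos : 0 < alpha)
  (* R > 1 with f(W_R) in W_R and W_R in A_p x Cx *)
  (HR : 1 < Rr)
  (HWinv : forall zw, in_WR alpha Rr zw -> in_WR alpha Rr (skew a c N d zw))
  (HWAp : forall zw, in_WR alpha Rr zw -> in_Ap a d (fst zw)) :
  (* on A_f: d^{-n} log^+ |Q_z^n(w)| -> +infinity *)
  (forall z w,
     (exists n, in_WR alpha Rr (skew_iter a c N d n (z, w))) ->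
     cv_infty (fun n => logp (Cnorm (snd (skew_iter a c N d n (z, w)))) / INR d ^ n))
  /\
  (* on B_f: G_p(z) exists and limsup d^{-n} log^+ |Q_z^n(w)| <= alpha G_p(z) *)
  (forall z w,
     in_Ap a d z ->
     ~ (exists n, in_WR alpha Rr (skew_iter a c N d n (z, w))) ->
     exists G : R,
       Un_cv (fun n => logp (Cnorm (Nat.iter n (poly1 a d) z)) / INR d ^ n) G /\
       (forall eps, eps > 0 -> exists M : nat, forall n, (M <= n)%nat ->
          logp (Cnorm (snd (skew_iter a c N d n (z, w)))) / INR d ^ n <= alpha * G + eps)).
Proof.
split.
- intros z w; exact (Af_escape a c N d gamma alpha Rr Hd Ha_lead Hgamma Hb_lead Hb_deg HR HWinv z w HWAp).
- intros z w; exact (Bf_limsup a c N d alpha Rr z w Hd Ha_lead HR Halpha_pos).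
Qed.
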